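(* Let $\mathcal X$ be a finite set (e.g. $\mathcal X=\mathcal V^L$), let $P,Q$ be probability distributions on $\mathcal X$, let $\delta>0$, let $\mathcal X_{\mathrm{Trunc}}=\{\mathbf x\in\mathcal X: Q(\mathbf x)\ge\delta\}$ and $\Delta=1-P(\mathcal X_{\mathrm{Trunc}})$, and assume $\Delta<1$. Let $P^{\mathrm{Trunc}}=P(\cdot\mid \mathcal X_{\mathrm{Trunc}})$ and $$\mathcal L^{\Delta}_{\mathrm{Trunc}}=-\mathbb E_{\mathbf x\sim P}\big[\mathbf 1_{\{Q(\mathbf x)\ge\delta\}}\log Q(\mathbf x)\big].$$ For any $\epsilon>0$, if $\mathcal L^{\Delta}_{\mathrm{Trunc}}\le \epsilon+(1-\Delta)H(P^{\mathrm{Trunc}})$, then there exists $\lambda\in(0,\infty)$ such that the precision–recall pair $(\alpha,\beta)=(\alpha_\lambda(P\Vert Q),\beta_\lambda(P\Vert Q))$ satisfies $\beta\ge (1-\Delta)-\sqrt{\epsilon}$ and $\alpha\ge 1-\sqrt{\frac{\epsilon}{2(1-\Delta)}}$.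
   Context: $H$ denotes Shannon entropy (natural logarithm). For $\lambda\in(0,\infty)$, $\alpha_\lambda(P\Vert Q)=\sum_{\mathbf x}\min(\lambda P(\mathbf x),Q(\mathbf x))$ and $\beta_\lambda(P\Vert Q)=\sum_{\mathbf x}\min(P(\mathbf x),Q(\mathbf x)/\lambda)$. When $Q$ is autoregressive on sequences, $\log Q(\mathbf x)=\sum_{l=1}^L\log Q(x_l\mid\mathbf x_{<l})$, so the loss above is the ''Trunc'' loss $-\mathbb E_{\mathbf x\sim P}[\sum_l \mathbf 1_{\{Q(\mathbf x)\ge\delta\}}\log Q(x_l\mid \mathbf x_{<l})]$. *)

From mathcomp Require Import all_boot all_order all_algebra.
From mathcomp Require Import reals exp.
Set Implicit Arguments. Unset Strict Implicit. Unset Printing Implicit Defensive.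
Import Order.TTheory GRing.Theory Num.Theory.
Local Open Scope ring_scope.

Section Defs.
Variables (R : realType) (T : finType).

Definition is_distr (P : T -> R) : Prop :=
  (forall x, 0 <= P x) /\ \sum_(x : T) P x = 1.

Definition entropy (P : T -> R) : R :=
  - \sum_(x : T | P x != 0) P x * ln (P x).

Definition Xtrunc (Q : T -> R) (delta : R) : {pred T} := fun x => delta <= Q x.

Definition probA (P : T -> R) (A : {pred T}) : R := \sum_(x : T | A x) P x.

Definition trunc_mass_loss (P Q : T -> R) (delta : R) : R :=
  1 - probA P (Xtrunc Q delta).

Definition cond_distr (P : T -> R) (A : {pred T}) : T -> R :=
  fun x => if A x then P x / probA P A else 0.

Definition trunc_loss (P Q : T -> R) (delta : R) : R :=
  - \sum_(x : T) P x * (if delta <= Q x then ln (Q x) else 0).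

Definition alpha_pr (lam : R) (P Q : T -> R) : R :=
  \sum_(x : T) Num.min (lam * P x) (Q x).
Definition beta_pr (lam : R) (P Q : T -> R) : R :=
  \sum_(x : T) Num.min (P x) (Q x / lam).

End Defs.

(* Take lambda = 1 / P(X_Trunc) and write P' = P^Trunc.  Then beta_lambda =
   alpha_lambda / lambda and alpha_lambda >= sum_{X_Trunc} min(P', Q).  The
   cross entropy of P' against Q on X_Trunc is H(P') + KL(P' || Q), so the
   hypothesis bounds this KL by eps / (1 - Delta).  A Pinsker inequality for
   the sub-probability Q restricted to X_Trunc then gives
   sum min(P', Q) >= 1 - sqrt(KL / 2).  It is proved pointwise: the bound
   u ln(u/v) - u + v >= 3 (u - v)^2 / (2 (u + 2v)) controls |u - v| by AM-GM
   with a free weight s; summing and taking s = sqrt(KL / 2) gives the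
   overlap bound, the missing mass of Q only helping. *)

From mathcomp Require Import all_boot all_order all_algebra.
From mathcomp Require Import reals normedtype exp derive realfun.
From mathcomp Require Import ring lra.
Set Implicit Arguments.
Unset Strict Implicit.
Unset Printing Implicit Defensive.

Import Order.TTheory GRing.Theory Num.Theory.
Import numFieldNormedType.Exports.
Local Open Scope ring_scope.

Section LnLowerBound.
Variable R : realType.

(* [u * ln_gap (u / v)] is the slack in [kl_integrand_ge]; its derivative has
   the sign of [(t - 1)^3], so it vanishes only at its minimum [t = 1]. *)
Definition ln_gap (t : R) := ln t + 4^-1 * t^-1 + 27/4 * (t + 2)^-1 - 5/2.

Lemma is_derive_ln_gap (t : R) : 0 < t ->
  is_derive t 1 ln_gap ((t - 1) ^+ 3 / (t ^+ 2 * (t + 2) ^+ 2)).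
Proof.
move=> t0; have t2 : 0 < t + 2 by lra.
have dV : is_derive t (1 : R) GRing.inv (- t ^- 2 *: 1).
  by apply: (@is_deriveV _ id); rewrite gt_eqF.
have dV2 : is_derive t (1 : R) (fun y => (y + 2)^-1) (- (t + 2) ^- 2 *: 1).
  by apply: (@is_deriveV _ (+%R^~ 2)); [rewrite gt_eqF | exact: is_derive_shift].
apply: is_derive_eq (is_deriveB (is_deriveD (is_deriveD (is_derive1_ln t0)
  (is_deriveZ 4^-1 dV)) (is_deriveZ (27/4) dV2)) (is_derive_cst (5/2 : R) t 1)) _.
by rewrite /GRing.scale /= !mulr1 subr0; field; rewrite !gt_eqF.
Qed.

Lemma ln_gap_ge0 (t : R) : 0 < t -> 0 <= ln_gap t.
Proof.
have ln_gap1 : ln_gap 1 = 0 by rewrite /ln_gap ln1 invr1; field.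
have MVT_ln_gap a b : 0 < a <= b -> exists2 c, a <= c <= b &
    ln_gap b - ln_gap a = (c - 1) ^+ 3 / (c ^+ 2 * (c + 2) ^+ 2) * (b - a).
  move=> /andP[a0 ab].
  have [x||c] := @MVT_segment _ ln_gap
      (fun c => (c - 1) ^+ 3 / (c ^+ 2 * (c + 2) ^+ 2)) a b ab.
  - by rewrite in_itv /= => /andP[ax _]; apply: is_derive_ln_gap; lra.
  - apply: derivable_within_continuous => y; rewrite in_itv /= => /andP[ax _].
    by case: (is_derive_ln_gap (lt_le_trans a0 ax)).
  by rewrite in_itv /=; exists c.
have denom_ge0 (c : R) : 0 <= c ^+ 2 * (c + 2) ^+ 2 by rewrite mulr_ge0 ?sqr_ge0.
move=> t0; case: (leP 1 t) => t1.
- have [c /andP[c1 _]] := MVT_ln_gap 1 t ltac:(lra).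
  rewrite ln_gap1 subr0 => ->.
  by rewrite mulr_ge0 ?divr_ge0 ?exprn_odd_ge0 ?subr_ge0.
- have [c /andP[_ c1]] := MVT_ln_gap t 1 ltac:(lra).
  rewrite ln_gap1 sub0r => /(congr1 -%R); rewrite opprK => ->.
  rewrite -2!mulNr mulr_ge0 ?divr_ge0 ?oppr_ge0 ?exprn_odd_le0 //;
    by rewrite ?subr_ge0 ?subr_le0 // ltW.
Qed.

Lemma kl_integrand_ge (u v : R) : 0 <= u -> 0 < v ->
  3 * (u - v) ^+ 2 / (2 * (u + 2 * v)) <= u * (ln u - ln v) - u + v.
Proof.
move=> u0 v0; have uv : 0 < u + 2 * v by lra.
case: (ltrgt0P u) u0 => // [{}u0 _|-> _]; last first.
  have -> : 3 * (0 - v) ^+ 2 / (2 * (0 + 2 * v)) = 3 / 4 * v.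
    by field; rewrite gt_eqF.
  by rewrite mul0r subr0 add0r ler_piMl ?ltW //; lra.
have := ln_gap_ge0 (divr_gt0 u0 v0); rewrite /ln_gap ln_div ?posrE // => gap.
rewrite -subr_ge0.
have -> : u * (ln u - ln v) - u + v - 3 * (u - v) ^+ 2 / (2 * (u + 2 * v)) =
    u * (ln u - ln v + 4^-1 / (u / v) + 27 / 4 / (u / v + 2) - 5 / 2).
  have uv2 : u / v + 2 = (u + 2 * v) / v by field; rewrite gt_eqF.
  by rewrite uv2; field; rewrite !gt_eqF.
exact: mulr_ge0 (ltW u0) gap.
Qed.

Lemma normr_le_sqr_div (w k : R) : 0 < k -> `|w| <= w ^+ 2 / (4 * k) + k.
Proof.
move=> k0; rewrite -subr_ge0 -real_normK ?num_real //.
have -> : `|w| ^+ 2 / (4 * k) + k - `|w| = (`|w| - 2 * k) ^+ 2 / (4 * k).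
  by field; rewrite gt_eqF.
by rewrite divr_ge0 ?sqr_ge0 // ltW // mulr_gt0.
Qed.

Lemma normr_sub_le_kl_integrand (u v s : R) : 0 <= u -> 0 < v -> 0 < s ->
  `|u - v| <= (u * (ln u - ln v) - u + v) / (2 * s) + s * (u + 2 * v) / 3.
Proof.
move=> u0 v0 s0; have uv : 0 < u + 2 * v by lra.
have k0 : 0 < s * (u + 2 * v) / 3 by rewrite divr_gt0 ?mulr_gt0.
apply: le_trans (normr_le_sqr_div (u - v) k0) _; rewrite lerD2r.
have -> : (u - v) ^+ 2 / (4 * (s * (u + 2 * v) / 3)) =
    3 * (u - v) ^+ 2 / (2 * (u + 2 * v)) / (2 * s).
  by field; rewrite !gt_eqF.
by rewrite ler_pM2r ?invr_gt0 ?mulr_gt0 ?kl_integrand_ge.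
Qed.

End LnLowerBound.

Section SubProbabilityPinsker.
Variables (R : realType) (T : finType).
Implicit Types (A : {pred T}) (U Q : T -> R).

Definition rel_entropy_on A U Q : R := \sum_(x | A x) U x * (ln (U x) - ln (Q x)).

Lemma pinsker_sum_min A U Q (s : R) :
  (forall x, A x -> 0 <= U x) -> (forall x, A x -> 0 < Q x) ->
  \sum_(x | A x) U x = 1 -> \sum_(x | A x) Q x <= 1 -> 0 < s ->
  rel_entropy_on A U Q <= 2 * s ^+ 2 ->
  1 - s <= \sum_(x | A x) Num.min (U x) (Q x).
Proof.
move=> U0 Q0 U1 V1 s0 kl.
set V := \sum_(x | A x) Q x in V1 *; set D := rel_entropy_on A U Q in kl.
set N := \sum_(x | A x) `|U x - Q x|.
have -> : \sum_(x | A x) Num.min (U x) (Q x) = (1 + V - N) / 2.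
  under eq_bigr do rewrite minr_absE.
  by rewrite -mulr_suml sumrB big_split /= U1.
have N_le : N <= \sum_(x | A x) ((U x * (ln (U x) - ln (Q x)) - U x + Q x) / (2 * s)
                                   + s * (U x + 2 * Q x) / 3).
  by apply: ler_sum => x Ax; apply: normr_sub_le_kl_integrand (U0 x Ax) (Q0 x Ax) s0.
have sumE : \sum_(x | A x) ((U x * (ln (U x) - ln (Q x)) - U x + Q x) / (2 * s)
                                   + s * (U x + 2 * Q x) / 3) =
   (D - 1 + V) / (2 * s) + s * (1 + 2 * V) / 3.
  rewrite big_split /= -!mulr_suml -mulr_sumr.
  by rewrite !big_split /= sumrN -mulr_sumr U1.
rewrite sumE in N_le.
have D_le : (D - 1 + V) / (2 * s) <= s - (1 - V) / (2 * s).
  have -> : s - (1 - V) / (2 * s) = (2 * s ^+ 2 - 1 + V) / (2 * s).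
    by field; rewrite gt_eqF.
  by rewrite ler_pM2r ?invr_gt0 ?mulr_gt0 // !lerD2r.
have AMGM : 1 <= (2 * s)^-1 + 2 * s / 3.
  rewrite -subr_ge0.
  have -> : (2 * s)^-1 + 2 * s / 3 - 1 = ((2 * s - 3 / 2) ^+ 2 + 3 / 4) / (6 * s).
    by field; rewrite gt_eqF.
  by apply: divr_ge0; [apply: addr_ge0; rewrite ?sqr_ge0 | ]; lra.
have : 1 - V <= (1 - V) * ((2 * s)^-1 + 2 * s / 3) by rewrite ler_peMr // subr_ge0.
lra.
Qed.

End SubProbabilityPinsker.

Section TruncatedDistributions.
Variables (R : realType) (T : finType).
Implicit Types (P Q : T -> R) (A : {pred T}).

Lemma probA_le1 P A : is_distr P -> probA P A <= 1.
Proof.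
move=> [P0 <-]; rewrite /probA [leRHS](bigID A) /= lerDl.
by apply: sumr_ge0 => x _.
Qed.

Lemma trunc_lossE P Q delta :
  trunc_loss P Q delta = - \sum_(x | Xtrunc Q delta x) P x * ln (Q x).
Proof.
rewrite /trunc_loss [in RHS]big_mkcond; congr -%R; apply: eq_bigr => x _.
by rewrite /Xtrunc; case: ifP; rewrite ?mulr0.
Qed.

Lemma cond_distrE P A x : A x -> cond_distr P A x = P x / probA P A.
Proof. by rewrite /cond_distr => ->. Qed.

Lemma cond_distr_ge0 P A x : (forall y, 0 <= P y) -> 0 <= probA P A ->
  0 <= cond_distr P A x.
Proof. by move=> P0 p0; rewrite /cond_distr; case: ifP => // _; rewrite divr_ge0. Qed.

Lemma sum_cond_distr P A : 0 < probA P A -> \sum_(x | A x) cond_distr P A x = 1.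
Proof.
move=> p0; under eq_bigr => x /cond_distrE -> do [].
by rewrite -mulr_suml divff ?gt_eqF.
Qed.

Lemma entropy_cond_distr P A :
  entropy (cond_distr P A) = - \sum_(x | A x) cond_distr P A x * ln (cond_distr P A x).
Proof.
rewrite /entropy big_mkcond [in RHS]big_mkcond; congr -%R; apply: eq_bigr => x _.
rewrite /cond_distr; case: (A x); last by rewrite eqxx.
by case: eqP => [->|]; rewrite ?mul0r.
Qed.

Lemma cross_entropy_cond_distr P Q A : 0 < probA P A ->
  - \sum_(x | A x) P x * ln (Q x) =
  probA P A * (entropy (cond_distr P A) + rel_entropy_on A (cond_distr P A) Q).
Proof.
move=> p0; rewrite entropy_cond_distr addrC -sumrB mulr_sumr -sumrN.
apply: eq_bigr => x Ax; rewrite -mulrBr addrAC subrr add0r !mulrN mulrA.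
by rewrite cond_distrE // (mulrC (probA P A)) divfK ?gt_eqF.
Qed.

Lemma beta_prE lam P Q : 0 < lam -> beta_pr lam P Q = lam^-1 * alpha_pr lam P Q.
Proof.
move=> lam0; rewrite /beta_pr /alpha_pr mulr_sumr; apply: eq_bigr => x _.
by rewrite minr_pMr ?invr_ge0 ?ltW // mulKf ?gt_eqF // (mulrC _^-1).
Qed.

Lemma alpha_pr_ge_restr lam P Q A : 0 <= lam ->
  (forall x, 0 <= P x) -> (forall x, 0 <= Q x) ->
  \sum_(x | A x) Num.min (lam * P x) (Q x) <= alpha_pr lam P Q.
Proof.
move=> lam0 P0 Q0; rewrite /alpha_pr [leRHS](bigID A) /= lerDl.
by apply: sumr_ge0 => x _; rewrite le_min mulr_ge0 ?P0 ?Q0.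
Qed.

Lemma alpha_pr_cond_ge P Q A (s : R) : is_distr P -> is_distr Q ->
  0 < probA P A -> (forall x, A x -> 0 < Q x) -> 0 < s ->
  rel_entropy_on A (cond_distr P A) Q <= 2 * s ^+ 2 ->
  1 - s <= alpha_pr (probA P A)^-1 P Q.
Proof.
move=> distrP distrQ p0 QA s0 kl.
apply: le_trans (alpha_pr_ge_restr A _ distrP.1 distrQ.1); last by rewrite invr_ge0 ltW.
under eq_bigr => x /(cond_distrE P) Ax do rewrite mulrC -Ax.
apply: pinsker_sum_min QA _ _ s0 kl.
- by move=> x _; apply: cond_distr_ge0; [exact: distrP.1 | exact: ltW].
- exact: sum_cond_distr.
- exact: probA_le1 A distrQ.
Qed.

End TruncatedDistributions.

Lemma mul_sqrt_div_le (R : realType) (p e : R) : 0 < p -> p <= 1 -> 0 <= e ->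
  p * Num.sqrt (e / (2 * p)) <= Num.sqrt e.
Proof.
move=> p0 p1 e0.
rewrite -{1}(ger0_norm (ltW p0)) -sqrtr_sqr -sqrtrM ?sqr_ge0 // ler_sqrt //.
have -> : p ^+ 2 * (e / (2 * p)) = p / 2 * e by field; rewrite gt_eqF.
by apply: ler_piMl => //; lra.
Qed.

Theorem proposition5p2 (R : realType) (T : finType) (P Q : T -> R) (delta eps : R) :
  is_distr P -> is_distr Q -> 0 < delta ->
  trunc_mass_loss P Q delta < 1 ->
  0 < eps ->
  trunc_loss P Q delta <=
    eps + (1 - trunc_mass_loss P Q delta) * entropy (cond_distr P (Xtrunc Q delta)) ->
  exists lam : R, 0 < lam /\
    beta_pr lam P Q >= (1 - trunc_mass_loss P Q delta) - Num.sqrt eps /\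
    alpha_pr lam P Q >=
      1 - Num.sqrt (eps / (2 * (1 - trunc_mass_loss P Q delta))).
Proof.
move=> distrP distrQ delta0 + eps0; rewrite /trunc_mass_loss subKr.
set A := Xtrunc Q delta; set p := probA P A => mass_lt1 hL.
have {mass_lt1}p0 : 0 < p by lra.
set s := Num.sqrt (eps / (2 * p)).
have s0 : 0 < s by rewrite sqrtr_gt0 divr_gt0 ?mulr_gt0.
have kl : rel_entropy_on A (cond_distr P A) Q <= 2 * s ^+ 2.
  have -> : 2 * s ^+ 2 = eps / p.
    by rewrite sqr_sqrtr ?divr_ge0 ?mulr_ge0 ?ltW //; field; rewrite gt_eqF.
  rewrite trunc_lossE cross_entropy_cond_distr // mulrDr [leRHS]addrC lerD2l in hL.
  by rewrite ler_pdivlMr // mulrC.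
have alpha : 1 - s <= alpha_pr p^-1 P Q.
  by apply: alpha_pr_cond_ge => // x; apply: lt_le_trans.
have ps : p * s <= Num.sqrt eps.
  by rewrite mul_sqrt_div_le ?(probA_le1 A distrP) ?ltW.
exists p^-1; split; first by rewrite invr_gt0.
split => //; rewrite beta_prE ?invr_gt0 // invrK.
have := ler_wpM2l (ltW p0) alpha; lra.
Qed.
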